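(* Let $\mathcal{S}$ be a relational schema, $\mathit{IC}$ a finite set of universal integrity constraints of the form $\forall \bar{x}(\bigwedge_{i=1}^{m} P_i(\bar{x}_i) \rightarrow \bigvee_{j=1}^{n} Q_j(\bar{y}_j) \vee \varphi)$, and $D$ a database instance (without nulls). Then the second-order sentence $\Phi(\Pi(\mathit{IC},D))$ associated to the repair program is logically equivalent to $$\mathcal{R}(D) \wedge \bigwedge_{P\in\mathcal{S}}\forall\bar x\big((P(\bar x)\vee P_{\mathbf{t}}(\bar x))\equiv P_\star(\bar x)\big)\wedge\bigwedge_{P\in\mathcal{S}}\forall\bar x\big((P_\star(\bar x)\wedge\neg P_{\mathbf{f}}(\bar x))\equiv P_{\star\star}(\bar x)\big)\wedge\bigwedge_{P\in\mathcal{S}}\forall\bar x\,\neg(P_{\mathbf{t}}(\bar x)\wedge P_{\mathbf{f}}(\bar x))\wedge \mathit{Circ}\big(\Theta;\{P_{\mathbf{t}},P_{\mathbf{f}}\mid P\in\mathcal{S}\};\{P_\star\mid P\in\mathcal{S}\}\big),$$ where $\Theta$ is the conjunction of the rules of types (1)–(3) of the repair program, each viewed as a first-order sentence, and $\mathit{Circ}$ denotes parallel circumscription.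
   Context: Repair program $\Pi(\mathit{IC},D)$: for each $P\in\mathcal{S}$ of arity $k$ there are new $k$-ary predicates $P_{\mathbf{t}}, P_{\mathbf{f}}, P_{\star}, P_{\star\star}$. Rules: (1) a fact $P(\bar a)$ for each $P(\bar a)\in D$; (2) for each constraint and each partition $Q'\cup Q''=\{Q_1,\ldots,Q_n\}$, $Q'\cap Q''=\emptyset$, the rule $\bigvee_{i=1}^m P_{i,\mathbf{f}}(\bar{x}_i)\vee\bigvee_{j=1}^n Q_{j,\mathbf{t}}(\bar y_j)\leftarrow \bigwedge_{i=1}^m P_{i,\star}(\bar x_i), \bigwedge_{Q_j\in Q'}Q_{j,\mathbf{f}}(\bar y_j), \bigwedge_{Q_k\in Q''}\mathit{not}\,Q_k(\bar y_k), \bar\varphi$, with $\bar\varphi$ a conjunction of built-ins equivalent to $\neg\varphi$; (3) $P_\star(\bar x)\leftarrow P(\bar x)$ and $P_\star(\bar x)\leftarrow P_{\mathbf{t}}(\bar x)$; (4) $P_{\star\star}(\bar x)\leftarrow P_\star(\bar x),\mathit{not}\,P_{\mathbf{f}}(\bar x)$; (5) program constraint $\leftarrow P_{\mathbf{t}}(\bar x),P_{\mathbf{f}}(\bar x)$. A rule is viewed as a first-order sentence by replacing commas with $\wedge$, $\mathit{not}$ with $\neg$, turning $\mathit{Head}\leftarrow\mathit{Body}$ into $\mathit{Body}\rightarrow\mathit{Head}$ and taking the universal closure; a constraint $\leftarrow B$ becomes $\neg B$. For a program $\Pi$, $\psi(\Pi)$ is the conjunction of these sentences. The SO sentence is $\Phi(\Pi):=\psi\wedge\neg\exists\bar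 X((\bar X<\bar P)\wedge\psi^\circ(\bar X))$, where $\bar P=(P_1,\ldots,P_n)$ lists the (non-built-in) predicates of $\psi$, $\bar X=(X^{P_1},\ldots,X^{P_n})$ are predicate variables of matching arities, $\bar X<\bar P$ means $\bigwedge_i\forall\bar x(X^{P_i}(\bar x)\rightarrow P_i(\bar x))\wedge\bigvee_i\exists\bar x(P_i(\bar x)\wedge\neg X^{P_i}(\bar x))$, and $\psi^\circ$ is defined recursively (with $\neg\chi$ written as $\chi\rightarrow\bot$): $P_i(\bar t)^\circ=X^{P_i}(\bar t)$; $(t_1=t_2)^\circ=(t_1=t_2)$ (built-ins unchanged); $\bot^\circ=\bot$; $(F\odot G)^\circ=F^\circ\odot G^\circ$ for $\odot\in\{\wedge,\vee\}$; $(F\rightarrow G)^\circ=(F^\circ\rightarrow G^\circ)\wedge(F\rightarrow G)$; $(\mathsf{Q}xF)^\circ=\mathsf{Q}xF^\circ$ for $\mathsf{Q}\in\{\forall,\exists\}$. The Herbrand models of $\Phi(\Pi)$ are the stable models of $\Pi$. $\mathcal{R}(D)$ (Reiter's reconstruction) is the conjunction of: the domain closure axiom $\forall x\bigvee_{c}x=c$ over the (active) domain constants; the unique names axioms $c\neq c'$ for distinct constants; and for each $P\in\mathcal{S}$ the completion $\forall\bar x(P(\bar x)\equiv\bigvee_{P(\bar a)\in D}\bar x=\bar a)$ (with empty disjunction $\bot$). Parallel circumscription: $\mathit{Circ}(\Sigma(\bar P,\bar Q);\bar P;\bar Q):=\Sigma(\bar P,\bar Q)\wedge\neg\exists\bar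 X\bar Y(\Sigma(\bar X,\bar Y)\wedge\bar X\le\bar P\wedge\bar X\neq\bar P)$, where $\bar X\le\bar P$ means $\bigwedge_i\forall\bar x(X_i(\bar x)\rightarrow P_i(\bar x))$; the predicates in $\bar Q$ vary, all others are fixed. *)

From HB Require Import structures.
From mathcomp Require Import all_boot.
Set Implicit Arguments. Unset Strict Implicit. Unset Printing Implicit Defensive.

Inductive term (C : Type) := TVar of nat | TCst of C.
Arguments TVar {C} _.
Arguments TCst {C} _.

Record builtin (C : Type) := Builtin { b_rel : seq C -> Prop; b_args : seq (term C) }.

Section Formulas.
Variables (C : Type) (S : Type) (sar : S -> nat).

Record atom := Atom { a_sym : S; a_args : (sar a_sym).-tuple (term C) }.

Inductive form :=
| FAtom of atom
| FBi of builtin C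
| FBot
| FAnd of form & form
| FOr of form & form
| FImp of form & form
| FAll of nat & form
| FEx of nat & form.

Definition FNot (f : form) := FImp f FBot.
Definition FTop := FImp FBot FBot.

Fixpoint bigAnd (fs : seq form) : form :=
  match fs with [::] => FTop | [:: f] => f | f :: fs' => FAnd f (bigAnd fs') end.
Fixpoint bigOr (fs : seq form) : form :=
  match fs with [::] => FBot | [:: f] => f | f :: fs' => FOr f (bigOr fs') end.

Definition tvars (t : term C) : seq nat := if t is TVar n then [:: n] else [::].

Fixpoint fv (f : form) : seq nat :=
  match f with
  | FAtom a => flatten (map tvars (a_args a))
  | FBi b => flatten (map tvars (b_args b))
  | FBot => [::]
  | FAnd f g | FOr f g | FImp f g => fv f ++ fv g
  | FAll n f | FEx n f => [seq m <- fv f | m != n]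
  end.

Definition uclose (f : form) : form := foldr FAll f (undup (fv f)).

(* interpretations of the signature over the (Herbrand) universe C *)
Definition interp := forall s : S, (sar s).-tuple C -> Prop.

Definition teval (nu : nat -> C) (t : term C) : C :=
  match t with TVar n => nu n | TCst c => c end.

Definition upd (nu : nat -> C) (n : nat) (c : C) : nat -> C :=
  fun m => if m == n then c else nu m.

Fixpoint eval (I : interp) (nu : nat -> C) (f : form) : Prop :=
  match f with
  | FAtom a => I (a_sym a) (map_tuple (teval nu) (a_args a))
  | FBi b => b_rel b (map (teval nu) (b_args b))
  | FBot => False
  | FAnd f g => eval I nu f /\ eval I nu g
  | FOr f g => eval I nu f \/ eval I nu g
  | FImp f g => eval I nu f -> eval I nu g
  | FAll n f => forall c, eval I (upd nu n c) f
  | FEx n f => exists c, eval I (upd nu n c) f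
  end.

Definition holds (I : interp) (f : form) : Prop := forall nu, eval I nu f.

End Formulas.

(* (inl s) is the original predicate s, (inr s) is the predicate var X^s.  *)
Section Circ.
Variables (C : Type) (S : Type) (sar : S -> nat).

Definition sar2 (s : S + S) : nat := match s with inl s | inr s => sar s end.

Fixpoint liftL (f : form C sar) : form C sar2 :=
  match f with
  | FAtom a => FAtom (@Atom C _ sar2 (inl (a_sym a)) (a_args a))
  | FBi b => FBi _ b
  | FBot => FBot _ _
  | FAnd f g => FAnd (liftL f) (liftL g)
  | FOr f g => FOr (liftL f) (liftL g)
  | FImp f g => FImp (liftL f) (liftL g)
  | FAll n f => FAll n (liftL f)
  | FEx n f => FEx n (liftL f)
  end.

Fixpoint circ (f : form C sar) : form C sar2 :=
  match f with
  | FAtom a => FAtom (@Atom C _ sar2 (inr (a_sym a)) (a_args a))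
  | FBi b => FBi _ b
  | FBot => FBot _ _
  | FAnd f g => FAnd (circ f) (circ g)
  | FOr f g => FOr (circ f) (circ g)
  | FImp f g => FAnd (FImp (circ f) (circ g)) (FImp (liftL f) (liftL g))
  | FAll n f => FAll n (circ f)
  | FEx n f => FEx n (circ f)
  end.

Definition pair_interp (I X : interp C sar) : interp C sar2 :=
  fun s => match s as s0 return (sar2 s0).-tuple C -> Prop with
           | inl s => I s | inr s => X s end.

Definition SOlt (X P : interp C sar) : Prop :=
  (forall s x, X s x -> P s x) /\ (exists s x, P s x /\ ~ X s x).

Definition PhiSO (psi : form C sar) (I : interp C sar) : Prop :=
  holds I psi /\ ~ exists X : interp C sar, SOlt X I /\ holds (pair_interp I X) (circ psi).

Definition CircP (Sigma : interp C sar -> Prop) (mini vary : S -> bool)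
    (I : interp C sar) : Prop :=
  Sigma I /\
  ~ exists X Y : interp C sar,
      Sigma (fun s => if mini s then X s else if vary s then Y s else I s)
      /\ (forall s, mini s -> forall x, X s x -> I s x)
      /\ ~ (forall s, mini s -> forall x, X s x <-> I s x).

End Circ.

(* kinds of program predicates: P, P_t, P_f, P_star, P_starstar *)
Inductive kind := KBase | Kt | Kf | Kst | Kss.

Section Repair.
Variables (Const : finType) (Pred : finType) (ar : Pred -> nat).

Definition psym := (Pred * kind)%type.
Definition par (p : psym) : nat := ar p.1.

Definition patom := atom Const par.
Definition pform := form Const par.
Definition pinterp := interp Const par.

Definition satom := {P : Pred & (ar P).-tuple (term Const)}.

(* A universal integrity constraint
     forall x (/\_i P_i(x_i) -> \/_j Q_j(y_j) \/ phi)
   given by its body atoms, its head atoms, and phibar: a conjunction of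
   built-ins equivalent to ~ phi (so phi is ~ /\ phibar). *)
Record ic := IC { ic_body : seq satom; ic_head : seq satom; ic_phibar : seq (builtin Const) }.

Definition instance := forall P : Pred, seq ((ar P).-tuple Const).

Definition mkA (k : kind) (a : satom) : patom :=
  @Atom Const psym par (projT1 a, k) (projT2 a).

Inductive lit := LPos of patom | LNeg of patom | LBi of builtin Const.

Definition lit_form (l : lit) : pform :=
  match l with
  | LPos a => FAtom a
  | LNeg a => FNot (FAtom a)
  | LBi b => FBi _ b
  end.

Inductive rule :=
| RFact of patom
| RRule of seq patom & seq lit
| RConstr of seq lit.

Definition rule_form (r : rule) : pform :=
  match r with
  | RFact a => uclose (FAtom a)
  | RRule h b => uclose (FImp (bigAnd (map lit_form b)) (bigOr (map (@FAtom _ _ _) h)))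
  | RConstr b => uclose (FNot (bigAnd (map lit_form b)))
  end.

Definition program_form (Pi : seq rule) : pform := bigAnd (map rule_form Pi).

(* all 0/1 masks of length n: true = in Q', false = in Q'' *)
Fixpoint masks (n : nat) : seq (seq bool) :=
  if n is n'.+1 then [seq b :: m | b <- [:: true; false], m <- masks n'] else [:: [::]].

Definition rules1 (D : instance) : seq rule :=
  flatten [seq [seq RFact (@Atom Const psym par (P, KBase) (map_tuple TCst a)) | a <- D P]
          | P <- enum Pred].

Definition rule2 (c : ic) (m : seq bool) : rule :=
  let QQ := zip (ic_head c) m in
  RRule ([seq mkA Kf a | a <- ic_body c] ++ [seq mkA Kt q | q <- ic_head c])
        ([seq LPos (mkA Kst a) | a <- ic_body c]
         ++ [seq LPos (mkA Kf qb.1) | qb <- QQ & qb.2]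
         ++ [seq LNeg (mkA KBase qb.1) | qb <- QQ & ~~ qb.2]
         ++ [seq LBi b | b <- ic_phibar c]).

Definition rules2 (IC : seq ic) : seq rule :=
  flatten [seq [seq rule2 c m | m <- masks (size (ic_head c))] | c <- IC].

Definition xvars (P : Pred) : (ar P).-tuple (term Const) := [tuple TVar i | i < ar P].
Definition xA (P : Pred) (k : kind) : patom := @Atom Const psym par (P, k) (xvars P).

Definition rules3 : seq rule :=
  flatten [seq [:: RRule [:: xA P Kst] [:: LPos (xA P KBase)];
                   RRule [:: xA P Kst] [:: LPos (xA P Kt)]] | P <- enum Pred].
Definition rules4 : seq rule :=
  [seq RRule [:: xA P Kss] [:: LPos (xA P Kst); LNeg (xA P Kf)] | P <- enum Pred].
Definition rules5 : seq rule :=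
  [seq RConstr [:: LPos (xA P Kt); LPos (xA P Kf)] | P <- enum Pred].

Definition repair_program (IC : seq ic) (D : instance) : seq rule :=
  rules1 D ++ rules2 IC ++ rules3 ++ rules4 ++ rules5.

Definition Theta (IC : seq ic) (D : instance) : pform :=
  program_form (rules1 D ++ rules2 IC ++ rules3).

(* Reiter's reconstruction R(D), in a Herbrand structure over Const
   (constants are interpreted by themselves) *)
Definition DCA : Prop := forall x : Const, exists c : Const, x = c.
Definition UNA : Prop := forall c c' : Const, c != c' -> c <> c'.
Definition Completion (D : instance) (I : pinterp) : Prop :=
  forall (P : Pred) (x : (ar P).-tuple Const),
    I (P, KBase) x <-> exists2 a, a \in D P & x = a.
Definition Reiter (D : instance) (I : pinterp) : Prop :=
  DCA /\ UNA /\ Completion D I.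

Definition is_min (p : psym) : bool := match p.2 with Kt | Kf => true | _ => false end.
Definition is_var (p : psym) : bool := match p.2 with Kst => true | _ => false end.

Definition circ_charac (IC : seq ic) (D : instance) (I : pinterp) : Prop :=
  Reiter D I
  /\ (forall (P : Pred) (x : (ar P).-tuple Const),
        (I (P, KBase) x \/ I (P, Kt) x) <-> I (P, Kst) x)
  /\ (forall (P : Pred) (x : (ar P).-tuple Const),
        (I (P, Kst) x /\ ~ I (P, Kf) x) <-> I (P, Kss) x)
  /\ (forall (P : Pred) (x : (ar P).-tuple Const), ~ (I (P, Kt) x /\ I (P, Kf) x))
  /\ CircP (fun J => holds J (Theta IC D)) is_min is_var I.

End Repair.

From HB Require Import structures.
From mathcomp Require Import all_boot.
From Stdlib Require Import Classical FunctionalExtensionality.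
From Stdlib Require List.
Set Implicit Arguments. Unset Strict Implicit. Unset Printing Implicit Defensive.

(* First, generic facts on the semantics of formulas show
   that Phi(Pi) defines the stable models of Pi: [circ] of a rule says that
   the smaller interpretation X satisfies the reduct of the rule relative to
   I ([PhiSO_stable]).  The key construction [cand] is the
   least interpretation closed under rules (3) and the reduct of rules (4)
   with prescribed database, P_t and P_f atoms; the reduct of rules (2) is
   monotone ([rules2_transfer]), so [cand] satisfies the reduct whenever its
   data come from a model of (2) and (3) ([cand_reduct]).  A stable model
   lies below such candidates ([stable_least], [stable_circ]), which yields
   the characterization; conversely the circumscription, applied to any
   reduct model X below I, forces X = I ([charac_stable]). *)

Lemma forall_In_map (A B : Type) (f : A -> B) (s : seq A) (Q : B -> Prop) :
  (forall y, List.In y (map f s) -> Q y) <-> (forall x, List.In x s -> Q (f x)).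
Proof.
split=> H x Hx; last by case/List.in_map_iff: Hx => y [<- /H].
by apply: H; apply/List.in_map_iff; exists x.
Qed.

Lemma In_mem (T : eqType) (x : T) (s : seq T) : List.In x s <-> x \in s.
Proof.
elim: s => [|y s IH] //=; rewrite in_cons.
by split=> [[->|/IH->]|/orP[/eqP->|/IH]]; rewrite ?eqxx ?orbT; auto.
Qed.

Section FormulaSemantics.
Variables (C S : Type) (sar : S -> nat).
Implicit Types (J : interp C sar) (f : form C sar) (nu : nat -> C).

Lemma upd_id nu n : upd nu n (nu n) = nu.
Proof. by apply: functional_extensionality => m; rewrite /upd; case: eqP => [->|]. Qed.

Lemma holds_foldr_all (S' : Type) (sar' : S' -> nat) (J : interp C sar') vs g :
  holds J (foldr (@FAll C S' sar') g vs) <-> holds J g.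
Proof.
elim: vs => [|n vs IH] //=; split=> H nu.
- by apply: (proj1 IH) => nu'; have := H nu' (nu' n); rewrite upd_id.
- by move=> c; apply: (proj2 IH).
Qed.

Lemma holds_uclose J f : holds J (uclose f) <-> holds J f.
Proof. exact: holds_foldr_all. Qed.

Lemma holds_circ_uclose (I X : interp C sar) f :
  holds (pair_interp I X) (circ (uclose f)) <-> holds (pair_interp I X) (circ f).
Proof.
have -> : forall vs, circ (foldr (@FAll C S sar) f vs) = foldr (@FAll _ _ _) (circ f) vs.
  by elim=> //= n vs ->.
exact: holds_foldr_all.
Qed.

Lemma eval_liftL (I X : interp C sar) nu f :
  eval (pair_interp I X) nu (liftL f) <-> eval I nu f.
Proof.
elim: f nu => //=.
- by move=> f IHf g IHg nu; rewrite IHf IHg.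
- by move=> f IHf g IHg nu; rewrite IHf IHg.
- by move=> f IHf g IHg nu; rewrite IHf IHg.
- by move=> n f IH nu; split=> H c; apply/IH.
- by move=> n f IH nu; split=> -[c /IH H]; exists c.
Qed.

(* Semantics of a conjunction of translated formulas, for any translation
   [tr] commuting with [FAnd] and sending [FTop] to a true formula; this
   covers both the identity and the transformation [circ]. *)
Lemma eval_bigAnd_map (S' : Type) (sar' : S' -> nat) (tr : form C sar -> form C sar')
    (J : interp C sar') nu (T : Type) (g : T -> form C sar) (Q : T -> Prop) (s : seq T) :
  (forall f1 f2, tr (FAnd f1 f2) = FAnd (tr f1) (tr f2)) -> eval J nu (tr (FTop C sar)) ->
  (forall x, eval J nu (tr (g x)) <-> Q x) ->
  eval J nu (tr (bigAnd (map g s))) <-> forall x, List.In x s -> Q x.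
Proof.
move=> trAnd trTop gQ; elim: s => [|x s IH] /=; first by split.
have -> : eval J nu (tr (bigAnd (g x :: map g s))) <->
          eval J nu (tr (g x)) /\ eval J nu (tr (bigAnd (map g s))).
  by case: s {IH} => [|y s] //=; rewrite ?trAnd /=; tauto.
rewrite gQ IH; split=> [[Hx Hs] y [<-|/Hs]|H] //; split; auto.
Qed.

Lemma eval_bigOr_map J nu (T : Type) (g : T -> form C sar) (Q : T -> Prop) (s : seq T) :
  (forall x, eval J nu (g x) <-> Q x) ->
  eval J nu (bigOr (map g s)) <-> exists x, List.In x s /\ Q x.
Proof.
move=> gQ; elim: s => [|x s IH] /=; first by split=> // -[? []].
have -> : eval J nu (bigOr (g x :: map g s)) <->
          eval J nu (g x) \/ eval J nu (bigOr (map g s)).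
  by case: s {IH} => [|y s] //=; tauto.
rewrite gQ IH; split=> [[Hx|[y [Hy Qy]]]|[y [[<-|Hy] Qy]]]; eauto.
Qed.

Lemma circ_bigOr (fs : seq (form C sar)) : circ (bigOr fs) = bigOr (map (@circ C S sar) fs).
Proof. by elim: fs => [|f [|g fs] IH] //=; rewrite IH. Qed.

End FormulaSemantics.

Section RuleSemantics.
Variables (Const Pred : finType) (ar : Pred -> nat).
Local Notation pI := (pinterp Const ar).
Local Notation rule := (rule Const ar).
Local Notation lit := (lit Const ar).
Local Notation patom := (patom Const ar).
Implicit Types (I X J : pI) (nu : nat -> Const) (r : rule) (Pi : seq rule).

Definition aval J nu (a : patom) : Prop := J (a_sym a) (map_tuple (teval nu) (a_args a)).

(* The reduct semantics of literals relative to a pair [(I, X)]: positive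
   atoms are read in [X], a negated atom must be false in both [X] and [I].
   This is exactly what [circ] makes of a literal (lemma [eval_circ_lit]). *)
Definition lit_sat I X nu (l : lit) : Prop :=
  match l with
  | LPos a => aval X nu a
  | LNeg a => ~ aval X nu a /\ ~ aval I nu a
  | LBi b => b_rel b (map (teval nu) (b_args b))
  end.

Definition body_sat I X nu (b : seq lit) : Prop := forall l, List.In l b -> lit_sat I X nu l.
Definition head_sat X nu (h : seq patom) : Prop := exists a, List.In a h /\ aval X nu a.

Definition rule_sat I X r : Prop :=
  match r with
  | RFact a => forall nu, aval X nu a
  | RRule h b => forall nu, body_sat I X nu b -> head_sat X nu h
  | RConstr b => forall nu, ~ body_sat I X nu b
  end.

Definition models I X Pi : Prop := forall r, List.In r Pi -> rule_sat I X r.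

Definition stable Pi I : Prop := models I I Pi /\ ~ exists X, SOlt X I /\ models I X Pi.

Lemma eval_lit J nu l : eval J nu (lit_form l) <-> lit_sat J J nu l.
Proof. by case: l => //= a; tauto. Qed.

Lemma eval_circ_lit I X nu l :
  eval (pair_interp I X) nu (circ (lit_form l)) <-> lit_sat I X nu l.
Proof. by case: l. Qed.

Lemma eval_body J nu b : eval J nu (bigAnd (map (@lit_form _ _ _) b)) <-> body_sat J J nu b.
Proof. by apply: (eval_bigAnd_map (tr := id)) => // l; exact: eval_lit. Qed.

Lemma eval_circ_body I X nu b :
  eval (pair_interp I X) nu (circ (bigAnd (map (@lit_form _ _ _) b))) <-> body_sat I X nu b.
Proof. by apply: eval_bigAnd_map => //; [split | exact: eval_circ_lit]. Qed.

Lemma eval_head J nu h : eval J nu (bigOr (map (@FAtom _ _ _) h)) <-> head_sat J nu h.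
Proof. exact: eval_bigOr_map. Qed.

Lemma eval_circ_head I X nu h :
  eval (pair_interp I X) nu (circ (bigOr (map (@FAtom _ _ _) h))) <-> head_sat X nu h.
Proof. by rewrite circ_bigOr -map_comp; exact: eval_bigOr_map. Qed.

Lemma holds_rule J r : holds J (rule_form r) <-> rule_sat J J r.
Proof.
case: r => [a|h b|b]; rewrite /rule_form holds_uclose /holds //=.
- by split=> H nu /eval_body /(H nu) /eval_head.
- by split=> H nu /eval_body /(H nu).
Qed.

Lemma holds_program J Pi : holds J (program_form Pi) <-> models J J Pi.
Proof.
have E nu : eval J nu (program_form Pi) <-> forall r, List.In r Pi -> eval J nu (rule_form r).
  exact: (eval_bigAnd_map (tr := id)).
split=> [H r Hr | H nu]; first by apply/holds_rule => nu; exact: (proj1 (E nu) (H nu)).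
by apply/E => r /H /holds_rule.
Qed.

Lemma holds_circ_rule I X r : rule_sat I I r ->
  holds (pair_interp I X) (circ (rule_form r)) <-> rule_sat I X r.
Proof.
rewrite /rule_form; case: r => [a|h b|b] HI; rewrite holds_circ_uclose /holds /=.
- by [].
- split=> [H nu | HX nu]; first by move/eval_circ_body/(proj1 (H nu))/eval_circ_head.
  split; first by move/eval_circ_body/HX/eval_circ_head.
  by move/eval_liftL/eval_body/HI/eval_head/(eval_liftL I X).
- split=> [H nu | HX nu]; first by move/eval_circ_body/(proj1 (H nu)).
  by split; [move/eval_circ_body/HX | move/eval_liftL/eval_body/HI].
Qed.

Lemma holds_circ_program I X Pi : models I I Pi ->
  holds (pair_interp I X) (circ (program_form Pi)) <-> models I X Pi.
Proof.
move=> HI.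
have E nu : eval (pair_interp I X) nu (circ (program_form Pi)) <->
            forall r, List.In r Pi -> eval (pair_interp I X) nu (circ (rule_form r)).
  by apply: eval_bigAnd_map => //; split.
split=> [H r Hr | HX nu].
- by apply/(holds_circ_rule _ (HI r Hr)) => nu; exact: (proj1 (E nu) (H nu)).
- by apply/E => r Hr; move: nu; apply/(holds_circ_rule _ (HI r Hr)); exact: HX.
Qed.

Lemma PhiSO_stable Pi I : PhiSO (program_form Pi) I <-> stable Pi I.
Proof.
rewrite /PhiSO /stable holds_program.
split=> -[HI noX]; split=> // -[X [ltXI HX]]; apply: noX; exists X; split=> //.
- exact: (proj2 (holds_circ_program X HI) HX).
- exact: (proj1 (holds_circ_program X HI) HX).
Qed.

Lemma stable_minimal Pi I K : stable Pi I ->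
  (forall s x, K s x -> I s x) -> models I K Pi -> forall s x, I s x -> K s x.
Proof.
move=> [_ noK] leKI HK s x Ix; apply: NNPP => nKx.
by apply: noK; exists K; split=> //; split=> //; exists s, x.
Qed.

End RuleSemantics.

Section RepairRules.
(* A constant [c0] makes valuations exist, so that universally closed rules
   can be read back as statements about tuples. *)
Variables (Const Pred : finType) (ar : Pred -> nat) (c0 : Const).
Local Notation pI := (pinterp Const ar).
Local Notation rule := (rule Const ar).
Local Notation lit := (lit Const ar).
Local Notation tup P := ((ar P).-tuple Const).
Local Notation xvars := (@xvars Const Pred ar).
Local Notation xA := (@xA Const Pred ar).
Local Notation rules3 := (@rules3 Const Pred ar).
Local Notation rules4 := (@rules4 Const Pred ar).
Local Notation rules5 := (@rules5 Const Pred ar).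
Implicit Types (I X J : pI) (nu : nat -> Const) (r : rule) (Pi : seq rule).

Lemma models_cat I X Pi Pi' : models I X (Pi ++ Pi') <-> models I X Pi /\ models I X Pi'.
Proof.
split=> [H | [H H'] r /List.in_app_iff [/H|/H'] //].
by split=> r Hr; apply: H; apply/List.in_app_iff; auto.
Qed.

Lemma models_flatten_map I X (T : Type) (f : T -> seq rule) (s : seq T) :
  models I X (flatten (map f s)) <-> forall x, List.In x s -> models I X (f x).
Proof.
rewrite -forall_In_map; split=> [H Pi HPi r Hr | H r /List.in_concat [Pi [/H HPi /HPi //]]].
by apply: H; apply/List.in_concat; exists Pi.
Qed.

Lemma models_pair I X r r' : models I X [:: r; r'] <-> rule_sat I X r /\ rule_sat I X r'.
Proof. by split=> [H | [H H'] _ [<-|[<-|[]]]] //; split; apply: H; simpl; auto. Qed.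

Lemma In_enum (P : Pred) : List.In P (enum Pred).
Proof. by apply/In_mem; rewrite mem_enum. Qed.

Definition xval nu (P : Pred) : tup P := map_tuple (teval nu) (xvars P).

Lemma all_xval P (Q : tup P -> Prop) : (forall nu, Q (xval nu P)) <-> forall x, Q x.
Proof.
split=> [H x | H nu]; last exact: H.
suff -> : x = xval (fun i => nth c0 x i) P by exact: H.
by apply: eq_from_tnth => i; rewrite tnth_map /xvars tnth_mktuple /= (tnth_nth c0).
Qed.

Lemma body_sat1 I X nu l : body_sat I X nu [:: l] <-> lit_sat I X nu l.
Proof. by split=> [|H _ [<-|[]]] //; apply; left. Qed.

Lemma body_sat2 I X nu l l' :
  body_sat I X nu [:: l; l'] <-> lit_sat I X nu l /\ lit_sat I X nu l'.
Proof. by split=> [H | [H H'] _ [<-|[<-|[]]]] //; split; apply: H; simpl; auto. Qed.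

Lemma sat_xrule I X P k (L : tup P -> Prop) b :
  (forall nu, body_sat I X nu b <-> L (xval nu P)) ->
  rule_sat I X (RRule [:: xA P k] b) <-> forall x, L x -> X (P, k) x.
Proof.
move=> bL; rewrite -(all_xval (fun x => L x -> X (P, k) x)) /=.
split=> H nu.
- by move/bL/(H nu) => -[a [[<-|[]]]].
- by move/bL/(H nu) => Hx; exists (xA P k); split; first left.
Qed.

Lemma sat_xconstr I X P (L : tup P -> Prop) b :
  (forall nu, body_sat I X nu b <-> L (xval nu P)) ->
  rule_sat I X (RConstr b) <-> forall x, ~ L x.
Proof.
move=> bL; rewrite -(all_xval (fun x => ~ L x)) /=.
by split=> H nu /bL /(H nu).
Qed.

Definition facts_in (D : instance Const ar) X : Prop :=
  forall P a, a \in D P -> X (P, KBase) a.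
Definition star_closed X : Prop :=
  forall P x, X (P, KBase) x \/ X (P, Kt) x -> X (P, Kst) x.
Definition sstar_closed I X : Prop :=
  forall P x, X (P, Kst) x -> ~ X (P, Kf) x -> ~ I (P, Kf) x -> X (P, Kss) x.
Definition tf_disjoint X : Prop := forall P x, ~ (X (P, Kt) x /\ X (P, Kf) x).

Lemma models_rules1 I X D : models I X (rules1 D) <-> facts_in D X.
Proof.
have mapK nu P (a : tup P) : map_tuple (teval nu) (map_tuple TCst a) = a.
  by apply: eq_from_tnth => i; rewrite !tnth_map.
rewrite /rules1 models_flatten_map.
have E P : models I X [seq RFact (@Atom _ _ (par ar) (P, KBase) (map_tuple TCst a)) | a <- D P]
           <-> forall a, a \in D P -> X (P, KBase) a.
  rewrite /models forall_In_map /= /aval.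
  split=> H a /In_mem Ha; first by have := H a Ha (fun=> c0); rewrite mapK.
  by move=> nu; rewrite mapK; exact: H.
by split=> H P; [apply/E/H/In_enum | move=> _; apply/E/H].
Qed.

Lemma models_rules3 I X : models I X rules3 <-> star_closed X.
Proof.
rewrite /rules3 models_flatten_map.
have E P : models I X [:: RRule [:: xA P Kst] [:: LPos (xA P KBase)];
                          RRule [:: xA P Kst] [:: LPos (xA P Kt)]] <->
           forall x, X (P, KBase) x \/ X (P, Kt) x -> X (P, Kst) x.
  rewrite models_pair (sat_xrule _ (fun nu => body_sat1 I X nu (LPos (xA P KBase))))
                      (sat_xrule _ (fun nu => body_sat1 I X nu (LPos (xA P Kt)))).
  by split=> [[H1 H2] x [/H1|/H2] | H] //; split=> x Hx; apply: H; auto.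
by split=> H P; [apply/E/H/In_enum | move=> _; apply/E/H].
Qed.

Lemma models_rules4 I X : models I X rules4 <-> sstar_closed I X.
Proof.
rewrite /rules4 /models forall_In_map.
have E P : rule_sat I X (RRule [:: xA P Kss] [:: LPos (xA P Kst); LNeg (xA P Kf)]) <->
           forall x, X (P, Kst) x -> ~ X (P, Kf) x -> ~ I (P, Kf) x -> X (P, Kss) x.
  rewrite (sat_xrule (L := fun x => X (P, Kst) x /\ ~ X (P, Kf) x /\ ~ I (P, Kf) x) _
             (fun nu => body_sat2 I X nu (LPos (xA P Kst)) (LNeg (xA P Kf)))).
  by split=> H x; [move=> ? ? ?; apply: H | move=> [? [? ?]]; apply: H].
by split=> H P; [apply/E/H/In_enum | move=> _; apply/E/H].
Qed.

Lemma models_rules5 I X : models I X rules5 <-> tf_disjoint X.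
Proof.
rewrite /rules5 /models forall_In_map.
have E P : rule_sat I X (RConstr [:: LPos (xA P Kt); LPos (xA P Kf)]) <->
           forall x, ~ (X (P, Kt) x /\ X (P, Kf) x).
  exact: (sat_xconstr (L := fun x => X (P, Kt) x /\ X (P, Kf) x) (fun nu => body_sat2 I X nu (LPos (xA P Kt)) (LPos (xA P Kf)))).
by split=> H P; [apply/E/H/In_enum | move=> _; apply/E/H].
Qed.


Lemma models_repair IC D I X :
  models I X (repair_program IC D) <->
  [/\ facts_in D X, models I X (rules2 IC), star_closed X, sstar_closed I X & tf_disjoint X].
Proof.
rewrite /repair_program !models_cat models_rules1 models_rules3 models_rules4 models_rules5.
by split=> [[? [? [? [? ?]]]] | []]; [split | split; [|split; [|split]]].
Qed.

Lemma holds_Theta IC D J :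
  holds J (Theta IC D) <-> [/\ facts_in D J, models J J (rules2 IC) & star_closed J].
Proof.
rewrite /Theta holds_program !models_cat models_rules1 models_rules3.
by split=> [[? [? ?]] | []]; [split | split; [|split]].
Qed.

Definition head_shape (a : patom Const ar) : Prop := (a_sym a).2 = Kt \/ (a_sym a).2 = Kf.
Definition lit_shape (l : lit) : Prop :=
  match l with
  | LPos a => (a_sym a).2 = Kst \/ (a_sym a).2 = Kf
  | LNeg a => (a_sym a).2 = KBase
  | LBi _ => True
  end.

Lemma rules2_shape IC r : List.In r (rules2 IC) -> exists h b, r = RRule h b /\
  (forall a, List.In a h -> head_shape a) /\ (forall l, List.In l b -> lit_shape l).
Proof.
case/List.in_concat => s [/List.in_map_iff [c [<- _]] /List.in_map_iff [m [<- _]]].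
eexists _, _; split; first reflexivity.
split=> [a /List.in_app_iff | l].
- by case=> /List.in_map_iff [q [<- _]]; [right | left].
- by move=> /List.in_app_iff [|/List.in_app_iff [|/List.in_app_iff []]]
     /List.in_map_iff [q [<- _]] /=; auto.
Qed.

Lemma rules2_transfer IC (I1 X1 I2 X2 : pI) :
  (forall P x, X2 (P, Kst) x -> X1 (P, Kst) x) ->
  (forall P x, X2 (P, Kf) x -> X1 (P, Kf) x) ->
  (forall P x, ~ X2 (P, KBase) x -> ~ I2 (P, KBase) x -> ~ X1 (P, KBase) x /\ ~ I1 (P, KBase) x) ->
  (forall P x, X1 (P, Kt) x -> X2 (P, Kt) x) ->
  (forall P x, X1 (P, Kf) x -> X2 (P, Kf) x) ->
  models I1 X1 (rules2 IC) -> models I2 X2 (rules2 IC).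
Proof.
move=> stS fS baseS tG fG H1 r Hr; have := H1 r Hr.
case: (rules2_shape Hr) => h [b [-> [hh hb]]] /= sat1 nu body2.
have [a [Ha Xa]] : head_sat X1 nu h.
  apply: sat1 => l Hl; move: (hb l Hl) (body2 l Hl).
  case: l {Hl} => [[[P k] args]|[[P k] args]|c] //=.
  - by case=> /= ->; [apply: stS | apply: fS].
  - by move=> /= ->; case; apply: baseS.
exists a; split=> //; move: (hh a Ha) Xa; case: a {Ha} => [[P k] args].
by case=> /= ->; [apply: tG | apply: fG].
Qed.

(* The interpretation with database atoms [B], [P_t = T], [P_f = F], and
   [P_star], [P_starstar] the least relations closed under the rules (3) and
   under the reduct of the rules (4) relative to [I]. *)
Definition cand I (B T F : forall P : Pred, tup P -> Prop) : pI :=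
  fun s => match s.2 with
           | KBase => B s.1 | Kt => T s.1 | Kf => F s.1
           | Kst => fun x => B s.1 x \/ T s.1 x
           | Kss => fun x => (B s.1 x \/ T s.1 x) /\ ~ I (s.1, Kf) x
           end.
Arguments cand : clear implicits.

Lemma cand_le I (B T F : forall P : Pred, tup P -> Prop) :
  star_closed I -> sstar_closed I I ->
  (forall P x, B P x -> I (P, KBase) x) -> (forall P x, T P x -> I (P, Kt) x) ->
  (forall P x, F P x -> I (P, Kf) x) ->
  forall s x, cand I B T F s x -> I s x.
Proof.
move=> I3 I4 BI TI FI.
have stI P x : B P x \/ T P x -> I (P, Kst) x by case=> [/BI|/TI]; auto.
move=> [P []] x /=; [exact: BI | exact: TI | exact: FI | exact: stI |].
by case=> /stI Hst nIf; apply: I4.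
Qed.

Lemma cand_reduct IC D I J (B : forall P : Pred, tup P -> Prop) :
  (forall P a, a \in D P -> B P a) -> (forall P x, B P x -> J (P, KBase) x) ->
  (forall P x, J (P, KBase) x -> I (P, KBase) x) ->
  models J J (rules2 IC) -> star_closed J -> tf_disjoint J ->
  models I (cand I B (fun P => J (P, Kt)) (fun P => J (P, Kf))) (repair_program IC D).
Proof.
move=> DB BJ JI J2 J3 J5; apply/models_repair; split=> //.
- apply: (rules2_transfer _ _ _ _ _ J2) => //= P x.
  + by case=> [/BJ|] Hx; apply: J3; auto.
  + by move=> _ nIx; split=> /JI.
Qed.

Lemma stable_least IC D I : stable (repair_program IC D) I ->
  forall s x, I s x -> cand I (fun P x => x \in D P) (fun P => I (P, Kt)) (fun P => I (P, Kf)) s x.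
Proof.
move=> stI; have [I1 I2 I3 I4 I5] := proj1 (models_repair _ _ _ _) (proj1 stI).
by apply: (stable_minimal stI); [apply: cand_le | apply: cand_reduct].
Qed.

Lemma stable_circ IC D I : stable (repair_program IC D) I ->
  CircP (fun J => holds J (Theta IC D)) (@is_min Pred) (@is_var Pred) I.
Proof.
move=> stI; have [I1 I2 I3 I4 I5] := proj1 (models_repair _ _ _ _) (proj1 stI).
split; first exact/holds_Theta.
case=> T [Y [/holds_Theta [J1 J2 J3] [leTI neTI]]]; apply: neTI => -[P k] mink x.
split; first exact: leTI.
have J5 P' y : ~ (T (P', Kt) y /\ T (P', Kf) y).
  by case=> /(leTI (P', Kt) erefl) Ht /(leTI (P', Kf) erefl) Hf; apply: (I5 P' y).
have IK : forall s y, I s y ->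
    cand I (fun P' => I (P', KBase)) (fun P' => T (P', Kt)) (fun P' => T (P', Kf)) s y.
  apply: (stable_minimal stI); last exact: (cand_reduct I1 _ _ J2 J3 J5).
  by apply: cand_le => // P' y; [apply: (leTI (P', Kt)) | apply: (leTI (P', Kf))].
by case: k mink x => // _ x /IK.
Qed.

Lemma stable_charac IC D I : stable (repair_program IC D) I -> circ_charac IC D I.
Proof.
move=> stI; have [I1 _ I3 I4 I5] := proj1 (models_repair _ _ _ _) (proj1 stI).
have least := stable_least stI.
have stI' P x : x \in D P \/ I (P, Kt) x -> I (P, Kst) x by case=> [/I1|]; auto.
split; [split; [|split] | split; [|split; [|split]]].
- by move=> x; exists x.
- by move=> c c' /eqP.
- by move=> P x; split=> [/(least (P, KBase)) Dx | [a /I1 Ia ->]]; first exists x.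
- by move=> P x; split=> [/I3 | /(least (P, Kst)) /= Hx]; last case: Hx => [/I1|]; auto.
- move=> P x; split=> [[Hst Hf] | /(least (P, Kss)) /= [/stI' Hst nf]] //.
  exact: I4.
- exact: I5.
- exact: stable_circ.
Qed.

(* Conversely, a reduct model [X] below [I] agrees with [I] on the database
   atoms by the completion, hence yields a competitor in the circumscription;
   so [X] agrees with [I] on [P_t], [P_f], and then everywhere. *)
Lemma charac_stable IC D I : circ_charac IC D I -> stable (repair_program IC D) I.
Proof.
case=> [[_ [_ compl]] [Est [Ess [I5 Icirc]]]].
have [I1 I2 I3] := proj1 (holds_Theta _ _ _) (proj1 Icirc).
have I4 : sstar_closed I I by move=> P x Hst Hf _; apply/Ess.
split; first exact/models_repair.
case=> X [[leXI [s [x [Ix nXx]]]] /models_repair [X1 X2 X3 X4 _]].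
have baseX P y : I (P, KBase) y -> X (P, KBase) y by case/compl => a /X1 ? ->.
have tfX : forall s, is_min s -> forall y, X s y <-> I s y.
  apply: NNPP => ne; apply: (proj2 Icirc); exists X, X.
  split; last by split=> // s' _; exact: leXI.
  apply/holds_Theta; split.
  - by move=> P a /I1.
  - by apply: (rules2_transfer _ _ _ _ _ X2) => //= P y nIy _; split=> // /leXI.
  - by move=> P y /= [/baseX|] Hy; apply: X3; auto.
have stX P y : I (P, Kst) y -> X (P, Kst) y.
  by case/Est => [/baseX|/(tfX (P, Kt) erefl)] Hy; apply: X3; auto.
apply: nXx; case: s x Ix => P [] y Iy.
- exact: baseX.
- exact/(tfX (P, Kt)).
- exact/(tfX (P, Kf)).
- exact: stX.
- by case/Ess: Iy => /stX Hst nIf; apply: X4 => // /leXI.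
Qed.

End RepairRules.

Theorem proposition2 (Const : finType) (Pred : finType) (ar : Pred -> nat)
    (IC : seq (ic Const ar)) (D : instance Const ar)
    (hC : 0 < #|Const|) (I : pinterp Const ar) :
  PhiSO (program_form (repair_program IC D)) I <-> circ_charac IC D I.
Proof.
case/card_gt0P: hC => c0 _.
rewrite PhiSO_stable.
split; [exact: stable_charac | exact: charac_stable].
Qed.
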